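(* Let $A$ be a nonempty finite set of positive integers, let $n$ be a positive integer, let $B$ be a nonempty subset of $A$, and let $\alpha$ be a positive integer with $\alpha\le|B|$. Then: (a) If $\binom{|A|}{\alpha}=\sum_{d=1}^{\sup A}\mu(d)\binom{v(A,d)}{\alpha}$, then $\binom{|B|}{\alpha}=\sum_{d=1}^{\sup B}\mu(d)\binom{v(B,d)}{\alpha}$. (b) If $\binom{|A|}{\alpha}=\sum_{d\mid n}\mu(d)\binom{v(A,d)}{\alpha}$, then $\binom{|B|}{\alpha}=\sum_{d\mid n}\mu(d)\binom{v(B,d)}{\alpha}$. (c) If $\sum_{d=1}^{\sup A}\mu(d)\binom{v(A,d)}{\alpha}=0$, then $\sum_{d=1}^{\sup B}\mu(d)\binom{v(B,d)}{\alpha}=0$. (d) If $\sum_{d\mid n}\mu(d)\binom{v(A,d)}{\alpha}=0$, then $\sum_{d\mid n}\mu(d)\binom{v(B,d)}{\alpha}=0$.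
   Context: For a finite nonempty set $X$ of positive integers, $\sup X$ is its largest element. $\mu$ is the Möbius function. For a positive integer $d$, $v(X,d)$ is the number of multiples of $d$ in $X$. Binomial coefficients $\binom{m}{k}$ are $0$ when $k>m$. *)

From HB Require Import structures.
From mathcomp Require Import all_boot all_order all_algebra.
From mathcomp Require Import finmap.
Set Implicit Arguments. Unset Strict Implicit. Unset Printing Implicit Defensive.
Import Order.TTheory GRing.Theory Num.Theory.
Local Open Scope fset_scope.

(* Möbius function, integer-valued: mu 0 = 0 (never used),
   mu d = (-1)^(number of prime factors) if d squarefree, else 0. *)
Definition mobius (d : nat) : int :=
  if d == 0%N then 0%R
  else if all (fun p => logn p d <= 1)%N (primes d)
       then ((-1) ^+ size (primes d))%R else 0%R.

(* sup X : largest element (0 for the empty set, never used here) *)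
Definition supX (X : {fset nat}) : nat := \max_(x <- X) x.

Definition v (X : {fset nat}) (d : nat) : nat := #|` [fset x in X | d %| x]|.

Definition Ssup (X : {fset nat}) (alpha : nat) : int :=
  (\sum_(1 <= d < (supX X).+1) mobius d * ('C(v X d, alpha))%:Z)%R.

Definition Sdiv (X : {fset nat}) (n alpha : nat) : int :=
  (\sum_(d <- divisors n) mobius d * ('C(v X d, alpha))%:Z)%R.

From HB Require Import structures.
From mathcomp Require Import all_boot all_order all_algebra.
From mathcomp Require Import finmap.
Import Order.TTheory GRing.Theory Num.Theory.
Set Implicit Arguments. Unset Strict Implicit.

(* Möbius inversion over the alpha-subsets S of X: sum_d mu(d) C(v(X,d), alpha)
   counts each S once for every d dividing all members of S, and
   sum_{d | g} mu(d) = [g = 1], so each sum counts the alpha-subsets S with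
   gcd(S) = 1 (resp. gcd(n, gcd(S)) = 1).  A count of C(|X|, alpha) means every
   alpha-subset qualifies and a count of 0 means none does; both properties
   pass to the alpha-subsets of B, which are alpha-subsets of A. *)

Lemma mobius_mul_prime_dvd p e :
  prime p -> p %| e -> 0 < e -> mobius (p * e) = 0%R.
Proof.
move=> pr_p pe e_gt0; have p_gt0 := prime_gt0 pr_p.
rewrite /mobius muln_eq0 eqn0Ngt p_gt0 eqn0Ngt e_gt0 /=.
case: ifP => // /allP /(_ p).
rewrite mem_primes pr_p muln_gt0 p_gt0 e_gt0 dvdn_mulr // lognM // logn_prime //.
have : p \in primes e by rewrite mem_primes pr_p e_gt0 pe.
by rewrite eqxx -logn_gt0; case: (logn p e) => // k _ /(_ isT).
Qed.

Lemma mobius_mul_prime_ndvd p e :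
  prime p -> ~~ (p %| e) -> 0 < e -> mobius (p * e) = (- mobius e)%R.
Proof.
move=> pr_p pe e_gt0; have p_gt0 := prime_gt0 pr_p.
have primes_pe : perm_eq (primes (p * e)) (p :: primes e).
  apply: uniq_perm; rewrite ?primes_uniq //=.
    by rewrite primes_uniq andbT mem_primes pr_p e_gt0 (negbTE pe).
  by move=> q; rewrite primesM // primes_prime // !inE.
rewrite /mobius muln_eq0 eqn0Ngt p_gt0 eqn0Ngt e_gt0 /= (perm_size primes_pe).
rewrite (perm_all _ primes_pe) /= lognM // logn_prime // eqxx exprS.
rewrite logn_coprime ?prime_coprime //.
have logn_pe : {in primes e, forall q, logn q (p * e) = logn q e}.
  move=> q; rewrite mem_primes lognM // logn_prime //.
  by case: eqP => // -> /and3P[_ _]; rewrite (negbTE pe).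
rewrite (eq_in_all (a2 := fun q => logn q e <= 1)); last first.
  by move=> q /logn_pe /= ->.
by rewrite /=; case: ifP => _; rewrite ?mulN1r ?oppr0.
Qed.

Lemma divisors_dvd_prime m p : 0 < m -> prime p -> p %| m ->
  perm_eq [seq d <- divisors m | p %| d] [seq p * e | e <- divisors (m %/ p)].
Proof.
move=> m_gt0 pr_p pm; have p_gt0 := prime_gt0 pr_p.
have mp_gt0 : 0 < m %/ p by rewrite divn_gt0 // dvdn_leq.
apply: uniq_perm; first by rewrite filter_uniq // divisors_uniq.
  by rewrite map_inj_uniq ?divisors_uniq // => a b /eqP; rewrite eqn_pmul2l // => /eqP.
move=> x; rewrite mem_filter -dvdn_divisors //; apply/idP/mapP.
  case/andP=> /dvdnP[e ->] xm; exists e; last by rewrite mulnC.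
  by rewrite -dvdn_divisors // dvdn_divRL // mulnC.
case=> e; rewrite -dvdn_divisors // => em ->.
by rewrite dvdn_mulr //= mulnC -dvdn_divRL.
Qed.

Lemma divisors_ndvd_prime m p : 0 < m -> prime p -> p %| m ->
  perm_eq [seq d <- divisors (m %/ p) | ~~ (p %| d)]
          [seq d <- divisors m | ~~ (p %| d)].
Proof.
move=> m_gt0 pr_p pm; have p_gt0 := prime_gt0 pr_p.
have mp_gt0 : 0 < m %/ p by rewrite divn_gt0 // dvdn_leq.
apply: uniq_perm; rewrite ?filter_uniq ?divisors_uniq // => d.
rewrite !mem_filter -!dvdn_divisors //; case: (boolP (p %| d)) => //= pd.
apply/idP/idP => [dm | dm]; first by rewrite -(divnK pm) dvdn_mulr.
have cop_dp : coprime d p by rewrite coprime_sym prime_coprime.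
by rewrite -(Gauss_dvdl _ cop_dp) divnK.
Qed.

(* For m > 1 with least prime factor p, the divisors p e (e | m/p) contribute
   mu(p e) = 0 if p | e and -mu(e) otherwise, cancelling those prime to p. *)
Lemma sum_mobius_divisors m :
  0 < m -> (\sum_(d <- divisors m) mobius d = (m == 1%N)%:R)%R.
Proof.
move=> m_gt0; case: (ltngtP m 1) => [|m_gt1|->];
  [by rewrite ltnNge m_gt0 | | by rewrite /divisors /= big_seq1].
have pr_p := pdiv_prime m_gt1; have pm := pdiv_dvd m; set p := pdiv m in pr_p pm *.
have mp_gt0 : 0 < m %/ p by rewrite divn_gt0 ?prime_gt0 // dvdn_leq.
have divisor_mp_gt0 e : e \in divisors (m %/ p) -> 0 < e.
  by rewrite -dvdn_divisors // => /dvdn_gt0; apply.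
rewrite (bigID (dvdn p)) /= -big_filter (perm_big _ (divisors_dvd_prime m_gt0 pr_p pm)).
rewrite big_map (bigID (dvdn p)) /= big_seq_cond big1 => [|e /andP[/divisor_mp_gt0 e_gt0 pe]];
  last exact: mobius_mul_prime_dvd.
rewrite add0r big_seq_cond (eq_bigr (fun e => - mobius e)%R) => [|e /andP[/divisor_mp_gt0 e_gt0 pe]];
  last exact: mobius_mul_prime_ndvd.
rewrite sumrN -big_seq_cond -big_filter (perm_big _ (divisors_ndvd_prime m_gt0 pr_p pm)).
by rewrite big_filter addNr.
Qed.

Lemma sum_mobius_filter (ds : seq nat) (P : pred nat) m :
  0 < m -> perm_eq [seq d <- ds | P d] (divisors m) ->
  (\sum_(d <- ds | P d) mobius d = (m == 1%N)%:R)%R.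
Proof. by move=> m_gt0 ds_m; rewrite -big_filter (perm_big _ ds_m) sum_mobius_divisors. Qed.

Lemma filter_dvd_index_iota N g : 0 < g <= N ->
  perm_eq [seq d <- index_iota 1 N.+1 | d %| g] (divisors g).
Proof.
case/andP=> g_gt0 gN; apply: uniq_perm; rewrite ?filter_uniq ?iota_uniq ?divisors_uniq //.
move=> d; rewrite mem_filter -dvdn_divisors // mem_index_iota.
case dg: (d %| g); rewrite ?andbF //= (dvdn_gt0 g_gt0 dg) ltnS.
exact: leq_trans (dvdn_leq g_gt0 dg) gN.
Qed.

Lemma filter_dvd_divisors n g : 0 < n ->
  perm_eq [seq d <- divisors n | d %| g] (divisors (gcdn n g)).
Proof.
move=> n_gt0; apply: uniq_perm; rewrite ?filter_uniq ?divisors_uniq // => d.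
by rewrite mem_filter -!dvdn_divisors ?gcdn_gt0 ?n_gt0 // dvdn_gcd andbC.
Qed.

Section SubsetCounting.
Variable T : finType.
Implicit Types (X Y : {set T}) (S : {set T}).
Local Open Scope ring_scope.

Definition ksubsets X (k : nat) := [set S : {set T} | S \subset X & #|S| == k].

Lemma ksubsetsS X Y k : X \subset Y -> ksubsets X k \subset ksubsets Y k.
Proof.
move=> sXY; apply/subsetP => S; rewrite !inE => /andP[sSX ->].
by rewrite (subset_trans sSX).
Qed.

Variable f : T -> nat.

Definition gcd_of S := \big[gcdn/0%N]_(x in S) f x.

Lemma ksubsets_dvd X k d :
  [set S in ksubsets X k | (d %| gcd_of S)%N] = ksubsets [set x in X | d %| f x]%N k.
Proof.
apply/setP => S; rewrite !inE andbAC; congr (_ && _).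
apply/andP/subsetP => [[/subsetP sSX /dvdn_biggcdP dS] x xS | sSXd].
  by rewrite inE sSX // dS.
split; first by apply/subsetP => x /sSXd; rewrite inE => /andP[].
by apply/dvdn_biggcdP => x /sSXd; rewrite inE => /andP[].
Qed.

Lemma sum_mobius_binomial (ds : seq nat) X k :
  \sum_(d <- ds) mobius d * ('C(#|[set x in X | d %| f x]%N|, k))%:Z
  = \sum_(S in ksubsets X k) \sum_(d <- ds | (d %| gcd_of S)%N) mobius d.
Proof.
have card_dvd d : ('C(#|[set x in X | d %| f x]%N|, k))%:Z
    = \sum_(S in ksubsets X k) (d %| gcd_of S)%N%:R.
  rewrite -cards_draws -/(ksubsets _ k) -ksubsets_dvd -sum1_card -natz natr_sum.
  rewrite big_mkcond [RHS]big_mkcond /=; apply: eq_bigr => S _; rewrite inE.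
  by case: (S \in _); case: (d %| _)%N.
under eq_bigr => d _ do rewrite card_dvd mulr_sumr.
rewrite exchange_big; apply: eq_bigr => S _; rewrite [RHS]big_mkcond; apply: eq_bigr => d _.
by case: (d %| _)%N; rewrite ?mulr1 ?mulr0.
Qed.

Lemma gcd_of_gt0 S : S != set0 -> (forall x, x \in S -> 0 < f x)%N -> (0 < gcd_of S)%N.
Proof.
case/set0Pn => x0 x0S f_gt0.
exact: dvdn_gt0 (f_gt0 x0 x0S) (biggcdn_inf x0 x0S (dvdnn _)).
Qed.

Lemma gcd_of_le S x : x \in S -> (0 < f x)%N -> (gcd_of S <= f x)%N.
Proof. by move=> xS fx_gt0; apply: dvdn_leq fx_gt0 (biggcdn_inf x xS (dvdnn _)). Qed.

End SubsetCounting.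

Section Indicators.
Variables (R : numDomainType) (U : finType) (P : pred U).
Implicit Types D : {pred U}.
Local Open Scope ring_scope.

Lemma sum_indicator_eq_card D :
  \sum_(S in D) (P S)%:R = #|D|%:R :> R <-> {in D, forall S, P S}.
Proof.
split=> [sumD | allP]; last by rewrite -sumr_const; apply: eq_bigr => S /allP ->.
have ge0 S : 0 <= 1 - (P S)%:R :> R by case: (P S); rewrite ?subrr ?subr0.
have /psumr_eq0P PD : \sum_(S in D) (1 - (P S)%:R) = 0 :> R.
  by rewrite sumrB sumr_const sumD subrr.
move=> S /(PD (fun S _ => ge0 S)) /eqP; rewrite subr_eq0.
by case: (P S) => //=; rewrite oner_eq0.
Qed.

Lemma sum_indicator_eq0 D :
  \sum_(S in D) (P S)%:R = 0 :> R <-> {in D, forall S, ~~ P S}.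
Proof.
split=> [/psumr_eq0P PD S SD | noP]; last by apply: big1 => S /noP /negbTE ->.
apply/negP => PS; move: (PD (fun S _ => ler0n R (P S)) S SD).
by rewrite PS /= => /eqP; rewrite oner_eq0.
Qed.

End Indicators.

Lemma le_supX (X : {fset nat}) x : x \in X -> x <= supX X.
Proof. by move=> xX; apply: (leq_bigmax_seq x). Qed.

Section FsetToOrdinal.
Variable N : nat.
Implicit Types X : {fset nat}.
Local Open Scope fset_scope.

Definition ordset X : {set 'I_N} := [set i : 'I_N | val i \in X].

Lemma card_ordset X : {in X, forall x, x < N} -> #|ordset X| = #|` X|.
Proof.
move=> X_N; rewrite cardE -(size_map val); apply/perm_size/uniq_perm.
- by rewrite map_inj_uniq ?enum_uniq //; apply: val_inj.
- exact: fset_uniq.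
move=> x; apply/mapP/idP => [[i] | xX]; first by rewrite mem_enum inE => + ->.
by exists (Ordinal (X_N x xX)); rewrite // mem_enum inE.
Qed.

Lemma v_ordset X d : {in X, forall x, x < N} ->
  v X d = #|[set i in ordset X | d %| i]|.
Proof.
move=> X_N; rewrite /v -card_ordset => [|x]; last by rewrite !inE => /andP[/X_N].
by apply: eq_card => i; rewrite !inE.
Qed.

Lemma binomial_ordset X k : {in X, forall x, x < N} ->
  (('C(#|` X|, k))%:Z = #|ksubsets (ordset X) k|%:R)%R.
Proof. by move=> X_N; rewrite natz -card_ordset // -cards_draws. Qed.

Lemma Ssup_ordset X k : 0 < k -> {in X, forall x, 0 < x < N} ->
  Ssup X k = (\sum_(S in ksubsets (ordset X) k) (gcd_of (@nat_of_ord N) S == 1%N)%:R)%R.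
Proof.
move=> k_gt0 X_N.
have X_ltN : {in X, forall x, x < N} by move=> x /X_N /andP[].
rewrite /Ssup; under eq_bigr => d _ do rewrite (v_ordset d X_ltN).
rewrite sum_mobius_binomial; apply: eq_bigr => S; rewrite inE => /andP[/subsetP sSX /eqP cardS].
have S_X i : i \in S -> 0 < i <= supX X.
  by move=> /sSX; rewrite inE => iX; rewrite le_supX // andbT; case/andP: (X_N _ iX).
have gcd_gt0 : 0 < gcd_of (@nat_of_ord N) S.
  by apply: gcd_of_gt0 => [|i /S_X /andP[]//]; rewrite -card_gt0 cardS.
apply: sum_mobius_filter => //; apply: filter_dvd_index_iota; rewrite gcd_gt0 /=.
have [i iS] : exists i, i \in S by apply/set0Pn; rewrite -card_gt0 cardS.
by case/andP: (S_X i iS) => i_gt0; apply: leq_trans (gcd_of_le iS i_gt0).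
Qed.

Lemma Sdiv_ordset X n k : 0 < n -> {in X, forall x, x < N} ->
  Sdiv X n k =
  (\sum_(S in ksubsets (ordset X) k) (gcdn n (gcd_of (@nat_of_ord N) S) == 1%N)%:R)%R.
Proof.
move=> n_gt0 X_N; rewrite /Sdiv; under eq_bigr => d _ do rewrite (v_ordset d X_N).
rewrite sum_mobius_binomial; apply: eq_bigr => S _.
by apply: sum_mobius_filter; [rewrite gcdn_gt0 n_gt0 | apply: filter_dvd_divisors].
Qed.

End FsetToOrdinal.

Local Open Scope ring_scope.
Local Open Scope fset_scope.

Theorem corollary5p4 (A B : {fset nat}) (n alpha : nat) :
  A != fset0 -> (forall x, x \in A -> 0 < x)%N -> (0 < n)%N ->
  B != fset0 -> B `<=` A -> (0 < alpha)%N -> (alpha <= #|` B|)%N ->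
  [/\ (('C(#|` A|, alpha))%:Z = Ssup A alpha -> ('C(#|` B|, alpha))%:Z = Ssup B alpha),
      (('C(#|` A|, alpha))%:Z = Sdiv A n alpha -> ('C(#|` B|, alpha))%:Z = Sdiv B n alpha),
      (Ssup A alpha = 0%R -> Ssup B alpha = 0%R)
    & (Sdiv A n alpha = 0%R -> Sdiv B n alpha = 0%R)].
Proof.
move=> _ A_gt0 n_gt0 _ /fsubsetP sBA alpha_gt0 _.
pose N := (supX A).+1.
have A_N : {in A, forall x, 0 < x < N}%N by move=> x xA; rewrite A_gt0 //= ltnS le_supX.
have B_N : {in B, forall x, 0 < x < N}%N by move=> x /sBA /A_N.
have A_ltN : {in A, forall x, x < N}%N by move=> x /A_N /andP[].
have B_ltN : {in B, forall x, x < N}%N by move=> x /B_N /andP[].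
have /subsetP sub : ksubsets (ordset N B) alpha \subset ksubsets (ordset N A) alpha.
  by apply/ksubsetsS/subsetP => i; rewrite !inE => /sBA.
rewrite !(binomial_ordset _ A_ltN) !(binomial_ordset _ B_ltN).
rewrite !(Ssup_ordset alpha_gt0 A_N) !(Ssup_ordset alpha_gt0 B_N).
rewrite !(Sdiv_ordset _ n_gt0 A_ltN) !(Sdiv_ordset _ n_gt0 B_ltN).
split=> [/esym/sum_indicator_eq_card allA | /esym/sum_indicator_eq_card allA
        | /sum_indicator_eq0 noA | /sum_indicator_eq0 noA].
- by apply/esym/sum_indicator_eq_card => S /sub /allA.
- by apply/esym/sum_indicator_eq_card => S /sub /allA.
- by apply/sum_indicator_eq0 => S /sub /noA.
- by apply/sum_indicator_eq0 => S /sub /noA.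
Qed.
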